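(* Let $D$ be a slim, semimodular diagram (of size at least $4$). Then every element $x$ of the left boundary chain $C_\ell(D)$ with $x\le c_\ell(D)$ has at most one lower cover in $D$ (i.e., is not join-reducible).
   Context: A slim, semimodular diagram is a planar Hasse diagram of a finite (upper) semimodular lattice whose join-irreducible elements contain no three-element antichain. The left boundary chain $C_\ell(D)$ of a planar lattice diagram $D$ is the maximal chain from $0$ to $1$ forming the left boundary of the diagram. An element of $D$ is called doubly irreducible if it has at most one upper cover and at most one lower cover in $D$. $c_\ell(D)$ denotes the smallest doubly irreducible element of $C_\ell(D)$. *)

From HB Require Import structures.
From mathcomp Require Import all_boot all_order all_algebra.
Set Implicit Arguments. Unset Strict Implicit. Unset Printing Implicit Defensive.
Import Order.TTheory GRing.Theory Num.Theory.

Section Lat.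
Context {disp : Order.disp_t} {L : finTBLatticeType disp}.

Definition covers (x y : L) : bool :=
  ((x < y)%O && [forall z : L, ~~ ((x < z)%O && (z < y)%O)]).

Definition covers_eq (x y : L) : bool := (x == y) || covers x y.

Definition upper_semimodular : Prop :=
  forall a b c : L, covers a b -> covers_eq (a `|` c)%O (b `|` c)%O.

Definition join_irreducible (x : L) : Prop :=
  x <> \bot%O /\ forall y z : L, x = (y `|` z)%O -> x = y \/ x = z.

Definition slim : Prop :=
  forall x y z : L, join_irreducible x -> join_irreducible y -> join_irreducible z ->
    x <> y -> y <> z -> x <> z ->
    ~ [/\ ~~ (x >=< y)%O, ~~ (y >=< z)%O & ~~ (x >=< z)%O].

Definition lower_covers (x : L) : {set L} := [set y | covers y x].
Definition upper_covers (x : L) : {set L} := [set y | covers x y].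

Definition doubly_irreducible (x : L) : bool :=
  (#|lower_covers x| <= 1)%N && (#|upper_covers x| <= 1)%N.

End Lat.

Section Diagram.
Context {R : realFieldType}.
Local Open Scope ring_scope.

Definition on_segment (A B P : R * R) : Prop :=
  exists t : R, 0 <= t <= 1 /\
    P = ((1 - t) * A.1 + t * B.1, (1 - t) * A.2 + t * B.2).

(* determinant of the vectors u and v; det u v < 0 means that u points
   strictly to the left of v (clockwise from v) *)
Definition det2 (u v : R * R) : R := u.1 * v.2 - u.2 * v.1.

Definition vsub (A B : R * R) : R * R := (A.1 - B.1, A.2 - B.2).

Context {disp : Order.disp_t} {L : finTBLatticeType disp}.

Definition planar_diagram (pos : L -> R * R) : Prop :=
  [/\ injective pos,
      (forall x y : L, covers x y -> (pos x).2 < (pos y).2),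
      (forall a b v : L, covers a b -> on_segment (pos a) (pos b) (pos v) ->
          v = a \/ v = b) &
      (forall a b c d : L, covers a b -> covers c d -> (a, b) <> (c, d) ->
          forall P : R * R, on_segment (pos a) (pos b) P ->
            on_segment (pos c) (pos d) P ->
            (P = pos a \/ P = pos b) /\ (P = pos c \/ P = pos d))].

(* The left boundary chain C_l(D): starts at 0, and from each of its
   elements x (other than 1) continues with the leftmost upper cover of x,
   i.e. the upper cover y such that the edge x->y lies strictly to the
   left of every other edge x->z going up from x. *)
Inductive left_boundary (pos : L -> R * R) : L -> Prop :=
  | lb_bot : left_boundary pos \bot%O
  | lb_step (x y : L) : left_boundary pos x -> covers x y ->
      (forall z : L, covers x z -> z <> y ->
         det2 (vsub (pos y) (pos x)) (vsub (pos z) (pos x)) < 0) ->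
      left_boundary pos y.

End Diagram.

(* Induction along the left boundary reduces the claim to a planarity fact
   (leftmost_cover_unique): if a is on the left boundary, a -> t is its
   leftmost upper edge, and t has a second lower cover z, then t is the only
   upper cover of a.  Otherwise a -> t would be enclosed by two chains from
   the last boundary element u below z up to t, and a maximal chain through a
   second upper cover of a would have to cross one of them. *)

From HB Require Import structures.
From mathcomp Require Import all_boot all_order all_algebra.
From mathcomp Require Import ring lra.
Import Order.TTheory GRing.Theory Num.Theory.
Set Implicit Arguments. Unset Strict Implicit. Unset Printing Implicit Defensive.

Lemma count_lt_sub (T : eqType) (P Q : pred T) (l : seq T) (x : T) :
  (forall y, P y -> Q y) -> x \in l -> Q x -> ~~ P x ->
  (count P l < count Q l)%N.
Proof.
move=> PQ; elim: l => [|y l IH] //=; rewrite inE => /orP[/eqP <- | xl] Qx nPx.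
  by rewrite Qx (negbTE nPx) ltnS; apply: sub_count => z; apply: PQ.
case Py: (P y); first by rewrite (PQ _ Py) ltn_add2l; exact: IH.
by rewrite add0n; apply: leq_trans (IH xl Qx nPx) (leq_addl _ _).
Qed.

Section Polylines.
Context {R : realFieldType}.
Local Open Scope ring_scope.
Implicit Types (A B W : R * R) (s t : seq (R * R)) (h : R).

(* Points ordered by height; an upward polyline is a ylt-path. *)
Definition ylt A B : bool := A.2 < B.2.

Definition xs A B h : R := A.1 + (h - A.2) / (B.2 - A.2) * (B.1 - A.1).

(* x-coordinate at height h of the upward polyline A :: s (meaningful for
   heights between A and the last vertex). *)
Fixpoint xat A s h : R :=
  if s is B :: s' then (if h <= B.2 then xs A B h else xat B s' h) else A.1.

Definition inside h1 h2 W : bool := (h1 < W.2) && (W.2 < h2).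

Lemma ylt_trans : transitive ylt.
Proof. by move=> B A C; apply: lt_trans. Qed.

Lemma ylt_last A s : path ylt A s -> A.2 <= (last A s).2.
Proof.
elim: s A => [|B s IH] A //= /andP[hAB p].
exact: le_trans (ltW hAB) (IH _ p).
Qed.

Lemma xs_left A B : xs A B A.2 = A.1.
Proof. by rewrite /xs subrr !mul0r addr0. Qed.

Lemma xs_right A B : A.2 < B.2 -> xs A B B.2 = B.1.
Proof.
move=> hAB; rewrite /xs divff ?mul1r ?subr_eq0 ?gt_eqF //.
by rewrite addrC subrK.
Qed.

Lemma xat_head A s : path ylt A s -> xat A s A.2 = A.1.
Proof. by case: s => [|B s] //= /andP[hAB _]; rewrite ltW // xs_left. Qed.

Lemma xat_vertex A s W : path ylt A s -> W \in A :: s -> xat A s W.2 = W.1.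
Proof.
elim: s A => [|B s IH] A /=; first by move=> _; rewrite inE => /eqP ->.
move=> /andP[hAB hp]; rewrite inE => /orP[/eqP -> | WB].
  by rewrite ltW // xs_left.
have above_B : forall V, V \in s -> B.2 < V.2.
  by move=> V; move/allP: (order_path_min ylt_trans hp); apply.
case: leP => hle; last exact: IH.
move: WB; rewrite inE => /orP[/eqP -> | Ws]; first by rewrite xs_right.
by have := above_B _ Ws; rewrite ltNge hle.
Qed.

Lemma xat_affine A s h1 h2 : path ylt A s -> A.2 <= h1 -> h1 <= h2 ->
  h2 <= (last A s).2 -> ~~ has (inside h1 h2) (A :: s) ->
  exists al be, forall h, h1 <= h -> h <= h2 -> xat A s h = al + be * h.
Proof.
elim: s A => [|B s IH] A /=.
  by move=> _ _ _ _ _; exists A.1, 0 => h _ _; rewrite mul0r addr0.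
move=> /andP[hAB hp] hA h12 hl /norP[_ hn].
case: (leP h2 B.2) => h2B.
  exists (A.1 - A.2 * ((B.1 - A.1) / (B.2 - A.2))), ((B.1 - A.1) / (B.2 - A.2)).
  by move=> h _ hh; rewrite (le_trans hh h2B) /xs; ring.
have hB1 : B.2 <= h1.
  by move: hn => /norP[+ _]; rewrite /inside h2B andbT -leNgt.
have [al [be Hab]] := IH B hp hB1 h12 hl hn.
exists al, be => h hh1 hh2; case: leP => hhB; last exact: Hab.
have eh : h = B.2 by apply/eqP; rewrite eq_le hhB (le_trans hB1 hh1).
by rewrite eh xs_right // -Hab -?eh // eh xat_head.
Qed.

Lemma polyline_ivt_affine A B s t h1 h2 :
  path ylt A s -> path ylt B t -> A.2 <= h1 -> B.2 <= h1 -> h1 <= h2 ->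
  h2 <= (last A s).2 -> h2 <= (last B t).2 ->
  ~~ has (inside h1 h2) (A :: s ++ B :: t) ->
  xat A s h1 < xat B t h1 -> xat B t h2 <= xat A s h2 ->
  exists h, h1 < h <= h2 /\ xat A s h = xat B t h.
Proof.
move=> pA pB hA hB h12 hlA hlB; rewrite -cat_cons has_cat => /norP[nA nB].
have [a1 [b1 E1]] := xat_affine pA hA h12 hlA nA.
have [a2 [b2 E2]] := xat_affine pB hB h12 hlB nB.
rewrite !E1 ?E2 // ?lexx // => f1 f2.
have hlt : h1 < h2.
  rewrite lt_neqAle h12 andbT; apply/negP => /eqP e; rewrite e in f1; lra.
have Cpos : 0 < b1 - b2 by nra.
pose r := (a2 - a1) / (b1 - b2).
have Er : a1 - a2 + (b1 - b2) * r = 0 by rewrite /r; field; rewrite gt_eqF.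
have hr1 : h1 < r by nra.
have hr2 : r <= h2 by nra.
by exists r; rewrite hr1 hr2 E1 ?E2 ?(ltW hr1) //; split => //; lra.
Qed.

(* Intermediate value theorem for two upward polylines: if A :: s is to the
   left of B :: t at height h1 and not to the left at height h2, they meet at
   some height in ]h1, h2].  Induction on the number of vertices strictly
   between h1 and h2, splitting at one of them. *)
Lemma polyline_ivt A B s t h1 h2 :
  path ylt A s -> path ylt B t -> A.2 <= h1 -> B.2 <= h1 -> h1 <= h2 ->
  h2 <= (last A s).2 -> h2 <= (last B t).2 ->
  xat A s h1 < xat B t h1 -> xat B t h2 <= xat A s h2 ->
  exists h, h1 < h <= h2 /\ xat A s h = xat B t h.
Proof.
move: {-1}(count _ _) (leqnn (count (inside h1 h2) (A :: s ++ B :: t))) => n.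
elim: n h1 h2 => [|n IH] h1 h2 hc pA pB hA hB h12 hlA hlB f1 f2.
  by apply: polyline_ivt_affine; rewrite // has_count -leqNgt.
case hh: (has (inside h1 h2) (A :: s ++ B :: t)); last first.
  by apply: polyline_ivt_affine; rewrite // hh.
move/hasP: hh => [W Win /andP[hW1 hW2]].
have fewer : forall h1' h2', h1 <= h1' -> h2' <= h2 -> W.2 <= h1' \/ h2' <= W.2 ->
    (count (inside h1' h2') (A :: s ++ B :: t) <= n)%N.
  move=> h1' h2' e1 e2 ew; rewrite -ltnS; apply: leq_trans hc.
  apply: (count_lt_sub (x := W)) => //.
  - move=> V /andP[V1 V2]; apply/andP.
    by split; [exact: le_lt_trans V1 | exact: lt_le_trans e2].
  - by apply/andP.
  - by rewrite /inside negb_and -!leNgt; case: ew => ->; rewrite ?orbT.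
case: (ltP (xat A s W.2) (xat B t W.2)) => hw.
  have [h [/andP[hh1 hh2] e]] : exists h, W.2 < h <= h2 /\ xat A s h = xat B t h.
    apply: IH; rewrite // ?(le_trans hA) ?(le_trans hB) ?(ltW hW1) ?(ltW hW2) //.
    by apply: fewer; rewrite ?(ltW hW1) ?lexx //; left.
  by exists h; rewrite e (lt_trans hW1 hh1) hh2.
have [h [/andP[hh1 hh2] e]] : exists h, h1 < h <= W.2 /\ xat A s h = xat B t h.
  apply: IH; rewrite // ?(ltW hW1) ?(le_trans (ltW hW2)) //.
  by apply: fewer; rewrite ?(ltW hW2) ?lexx //; right.
by exists h; rewrite e hh1 (le_trans hh2 (ltW hW2)).
Qed.

Lemma xs_lt A B C h : A.2 < B.2 -> A.2 < C.2 ->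
  det2 (vsub B A) (vsub C A) < 0 -> A.2 < h -> xs A B h < xs A C h.
Proof.
rewrite /det2 /vsub /= => hB hC hd hh.
set d1 := B.2 - A.2 in hd *; set d2 := C.2 - A.2 in hd *.
have d1p : 0 < d1 by rewrite subr_gt0.
have d2p : 0 < d2 by rewrite subr_gt0.
set k1 := (B.1 - A.1) / d1; set k2 := (C.1 - A.1) / d2.
have e1 : B.1 - A.1 = k1 * d1 by rewrite mulrVK // unitfE gt_eqF.
have e2 : C.1 - A.1 = k2 * d2 by rewrite mulrVK // unitfE gt_eqF.
have -> : xs A B h = A.1 + (h - A.2) * k1 by rewrite /xs /k1 -/d1; ring.
have -> : xs A C h = A.1 + (h - A.2) * k2 by rewrite /xs /k2 -/d2; ring.
rewrite e1 e2 in hd.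
have hk : k1 < k2.
  rewrite ltNge; apply/negP => hk.
  have : 0 <= (d1 * d2) * (k1 - k2) by rewrite pmulr_rge0 ?mulr_gt0 // subr_ge0.
  have -> : (d1 * d2) * (k1 - k2) = k1 * d1 * d2 - d1 * (k2 * d2) by ring.
  lra.
by rewrite ltrD2l ltr_pM2l // subr_gt0.
Qed.
End Polylines.

Section CoveringChains.
Context {disp : Order.disp_t} {L : finTBLatticeType disp}.
Local Open Scope order_scope.
Implicit Types (u v w x y : L) (s : seq L).

Lemma covers_lt x y : covers x y -> x < y.
Proof. by case/andP. Qed.

Lemma covers_between x y v : covers x y -> x < v -> v < y -> False.
Proof. by move=> /andP[_ /forallP /(_ v)]; rewrite negb_and => /orP[]/negP. Qed.

(* Below any element strictly above v there is an upper cover of v: take an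
   element of ]v, c] with the fewest elements below it. *)
Lemma exists_cover v c : v < c -> exists2 d, covers v d & d <= c.
Proof.
move=> vc; have vcc : (v < c) && (c <= c) by rewrite vc lexx.
have [d /andP[vd dc] dmin] :=
  @arg_minnP _ c (fun d => (v < d) && (d <= c)) (fun d => #|[set e | e < d]|) vcc.
exists d => //; apply/andP; split => //; apply/forallP => e.
apply/negP => /andP[ve ed].
have := dmin e; rewrite ve (le_trans (ltW ed) dc) => /(_ isT); apply/negP.
rewrite -ltnNge; apply: proper_card; apply/properP; split.
  by apply/subsetP => f; rewrite !inE => /lt_trans; apply.
by exists e; rewrite !inE ?ed ?ltxx.
Qed.

Lemma covering_chain v w : v <= w -> exists s, path covers v s /\ last v s = w.
Proof.
move: {-1}#|_| (leqnn #|[set d | v < d <= w]|) => n.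
elim: n v => [|n IH] v hc hvw.
all: case: (eqVneq v w) => [-> | hne]; first by exists [::].
all: have hlt : v < w by rewrite lt_neqAle hne hvw.
  by move: hc; rewrite leqn0 => /eqP/cards0_eq/setP/(_ w); rewrite !inE hlt lexx.
have [c vc cw] := exists_cover hlt.
have [s [ps ls]] : exists s, path covers c s /\ last c s = w.
  apply: (IH c _ cw); rewrite -ltnS; apply: leq_trans hc; apply: proper_card.
  apply/properP; split.
    by apply/subsetP => e; rewrite !inE => /andP[/(lt_trans (covers_lt vc)) -> ->].
  by exists c; rewrite !inE ?(covers_lt vc) ?cw ?ltxx.
by exists (c :: s); rewrite /= vc ps ls.
Qed.

Lemma path_gt v s : path covers v s -> all (fun w => v < w) s.
Proof.
move=> p; apply: (order_path_min (@lt_trans _ L)).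
by apply: sub_path p => x y /covers_lt.
Qed.

Lemma path_ge_head v s w : path covers v s -> w \in v :: s -> v <= w.
Proof.
move=> p; rewrite inE => /orP[/eqP -> // | ws].
by move/allP: (path_gt p) => /(_ _ ws) /ltW.
Qed.

Lemma path_le_last v s w : path covers v s -> w \in v :: s -> w <= last v s.
Proof.
elim: s v w => [|x s IH] v w /=; first by move=> _; rewrite inE => /eqP ->.
move=> /andP[hc p]; rewrite inE => /orP[/eqP -> | ws]; last exact: IH.
exact: le_trans (ltW (covers_lt hc)) (IH _ _ p (mem_head _ _)).
Qed.

Lemma chain_through u z t : u <= z -> covers z t ->
  exists r1 sR, [/\ path covers u (r1 :: sR), last r1 sR = t &
    forall x, x \in u :: r1 :: sR -> x = t \/ x <= z].
Proof.
move=> uz zt; have [s [ps ls]] := covering_chain uz.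
have [r1 [sR esR]] : exists r1 sR, rcons s t = r1 :: sR.
  by case: (s) => [|r q]; [exists t, [::] | exists r, (rcons q t)].
exists r1, sR; split.
- by rewrite -esR rcons_path ps ls.
- by have := last_rcons u s t; rewrite esR.
move=> x; rewrite -esR inE mem_rcons inE => /or3P[/eqP -> | /eqP -> | xs].
- by right.
- by left.
by right; rewrite -ls path_le_last // inE xs orbT.
Qed.

Lemma split_last_below (e : rel L) z w s :
  (forall x y, e x y -> x <= y) -> path e w s -> w <= z ->
  exists u s', [/\ u <= z, path e u s', last u s' = last w s &
    all (fun v => ~~ (v <= z)) s'].
Proof.
move=> emono; elim: s w => [|x s IH] w /=; first by exists w, [::].
move=> /andP[wx p] wz; case: (boolP (x <= z)) => xz; first exact: IH.
exists w, (x :: s); split => //; first by rewrite /= wx.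
rewrite /= xz; apply/allP => v vs.
apply: contra xz => /(le_trans _); apply.
have ps : path (fun a b => a <= b) x s by apply: sub_path p => ? ? /emono.
by move: (order_path_min le_trans ps) => /allP; apply.
Qed.
End CoveringChains.

Section PlanarDiagram.
Context {R : realFieldType} {disp : Order.disp_t} {L : finTBLatticeType disp}.
Variable pos : L -> R * R.
Hypothesis Hpl : planar_diagram pos.
Local Open Scope ring_scope.
Local Open Scope order_scope.
Implicit Types (u v w x y : L) (s q : seq L) (h : R).

Local Notation height x := (pos x).2.
Local Notation xchain v s := (xat (pos v) (map pos s)).

Lemma covers_h x y : covers x y -> height x < height y.
Proof. by case: Hpl => _ H _ _; apply: H. Qed.

Lemma path_ylt v s : path covers v s -> path ylt (pos v) (map pos s).
Proof. by move=> p; rewrite path_map; apply: sub_path p => x y /covers_h. Qed.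

Lemma le_h v w : v <= w -> height v <= height w.
Proof.
move=> /covering_chain [s [p ls]].
by have := ylt_last (path_ylt p); rewrite last_map ls.
Qed.

Lemma lt_h v w : v < w -> height v < height w.
Proof. by move=> /exists_cover [c /covers_h vc /le_h]; apply: lt_le_trans. Qed.

Lemma chain_point_on_edge v s h : path covers v s -> s != [::] ->
  height v <= h -> h <= height (last v s) ->
  exists x1 x2, [/\ x1 \in v :: s, x2 \in v :: s, covers x1 x2 &
    on_segment (pos x1) (pos x2) (xchain v s h, h)].
Proof.
elim: s v => [|w s IH] v //= /andP[vw p] _ h1 h2.
case: (leP h (height w)) => hw.
  exists v, w; split; rewrite ?inE ?eqxx ?orbT //.
  have hd : 0 < height w - height v by rewrite subr_gt0 covers_h.
  exists ((h - height v) / (height w - height v)); split.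
    apply/andP; split; first by apply: divr_ge0; [rewrite subr_ge0 | exact: ltW].
    by rewrite ler_pdivrMr // mul1r lerB.
  by rewrite /xs; congr (_, _); [ring | field; rewrite gt_eqF].
have sne : s != [::] by case: s {IH p} h2 => //= h2; rewrite leNgt hw in h2.
have [x1 [x2 [i1 i2 c12 hs]]] := IH w p sne (ltW hw) h2.
by exists x1, x2; split; rewrite // inE ?i1 ?i2 orbT.
Qed.

Lemma edges_meet a b c d P : covers a b -> covers c d ->
  on_segment (pos a) (pos b) P -> on_segment (pos c) (pos d) P ->
  (a = c /\ b = d) \/ exists x, [/\ x = a \/ x = b, x = c \/ x = d & pos x = P].
Proof.
case: Hpl => inj _ _ H4 hab hcd s1 s2.
case: (eqVneq (a, b) (c, d)) => [[-> ->] | /eqP hne]; first by left.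
have [[e1|e1] [e2|e2]] := H4 a b c d hab hcd hne P s1 s2; right.
- by exists a; split; [left | left; apply: inj; rewrite -e1 -e2 | ].
- by exists a; split; [left | right; apply: inj; rewrite -e1 -e2 | ].
- by exists b; split; [right | left; apply: inj; rewrite -e1 -e2 | ].
- by exists b; split; [right | right; apply: inj; rewrite -e1 -e2 | ].
Qed.

Definition chains_meet v s w q h1 h2 : Prop :=
  (exists x1 x2, [/\ x1 \in v :: s, x1 \in w :: q, x2 \in v :: s,
     x2 \in w :: q & covers x1 x2])
  \/ exists x, [/\ x \in v :: s, x \in w :: q & h1 < height x <= h2].

Lemma chains_cross v s w q h1 h2 :
  path covers v s -> path covers w q -> s != [::] -> q != [::] ->
  height v <= h1 -> height w <= h1 -> h1 <= h2 ->
  h2 <= height (last v s) -> h2 <= height (last w q) ->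
  xchain v s h1 < xchain w q h1 -> xchain w q h2 <= xchain v s h2 ->
  chains_meet v s w q h1 h2.
Proof.
move=> ps pq sn qn hv hw h12 hsl hql f1 f2.
have [h [/andP[hh1 hh2] E]] : exists h, h1 < h <= h2 /\ xchain v s h = xchain w q h.
  by apply: polyline_ivt; rewrite ?last_map //; exact: path_ylt.
have [x1 [x2 [i1 i2 c12 s12]]] :=
  chain_point_on_edge ps sn (le_trans hv (ltW hh1)) (le_trans hh2 hsl).
have [x3 [x4 [i3 i4 c34 s34]]] :=
  chain_point_on_edge pq qn (le_trans hw (ltW hh1)) (le_trans hh2 hql).
rewrite E in s12.
have [[e1 e2] | [x [ex1 ex2 ep]]] := edges_meet c12 c34 s12 s34.
  by left; exists x1, x2; rewrite e1 e2 in i1 i2 *.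
right; exists x; rewrite ep hh1 hh2.
by split => //; [case: ex1 => -> | case: ex2 => ->].
Qed.

Lemma meet_only_at v s w q a h1 h2 :
  (forall x, x \in v :: s -> x \in w :: q -> x = a) -> height a <= h1 ->
  ~ chains_meet v s w q h1 h2.
Proof.
move=> common ha [[x1 [x2 [i1 i2 i3 i4 /covers_lt]]] | [x [i1 i2 /andP[hx _]]]].
  by rewrite (common _ i1 i2) (common _ i3 i4) ltxx.
by move: hx; rewrite (common _ i1 i2) ltNge ha.
Qed.

Lemma chain_avoids_vertex v s x : path covers v s -> s != [::] ->
  x \notin v :: s -> height v <= height x -> height x <= height (last v s) ->
  xchain v s (height x) != (pos x).1.
Proof.
move=> p sn xs hv hl; apply/eqP => e.
have [x1 [x2 [i1 i2 c12]]] := chain_point_on_edge p sn hv hl.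
rewrite e -surjective_pairing.
case: Hpl => _ _ H3 _ /(H3 _ _ _ c12) [ex | ex].
  by move: xs; rewrite ex i1.
by move: xs; rewrite ex i2.
Qed.

Lemma first_edge_left v x1 s y1 q b :
  covers v x1 -> covers v y1 ->
  det2 (vsub (pos x1) (pos v)) (vsub (pos y1) (pos v)) < 0 -> height v < b ->
  exists h, height v < h < b /\ xchain v (x1 :: s) h < xchain v (y1 :: q) h.
Proof.
move=> /covers_h vx /covers_h vy hdet vb.
pose m := Num.min (height x1) (Num.min (height y1) b).
have vm : height v < m by rewrite !lt_min vx vy vb.
have [mx [my mb]] : [/\ m <= height x1, m <= height y1 & m <= b].
  by split; rewrite ?ge_min ?lexx ?orbT.
exists ((height v + m) / 2%:R); split; first by apply/andP; split; lra.
rewrite /= !ifT; try lra.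
by apply: xs_lt => //; lra.
Qed.

Lemma chain_stays_left u l1 sL r1 sR t :
  path covers u (l1 :: sL) -> last l1 sL = t ->
  path covers u (r1 :: sR) -> last r1 sR = t ->
  det2 (vsub (pos l1) (pos u)) (vsub (pos r1) (pos u)) < 0 ->
  (forall x, x \in u :: l1 :: sL -> x \in u :: r1 :: sR -> x = u \/ x = t) ->
  ~~ covers u t ->
  forall h, height u < h -> h < height t ->
    xchain u (l1 :: sL) h < xchain u (r1 :: sR) h.
Proof.
move=> pL lL pR lR hdet common nut h2 uh2 h2t; rewrite ltNge; apply/negP => f2.
have [ul1 ur1] : covers u l1 /\ covers u r1 by case/andP: pL; case/andP: pR.
have [h1 [/andP[uh1 h12] f1]] := first_edge_left sL sR ul1 ur1 hdet uh2.
have ut : u <= t by rewrite -lL (path_le_last pL (mem_head _ _)).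
have : chains_meet u (l1 :: sL) u (r1 :: sR) h1 h2.
  by apply: chains_cross; rewrite //= ?lL ?lR ?(ltW uh1) ?(ltW h12) ?(ltW h2t).
case=> [[x1 [x2 [i1 i2 i3 i4 c12]]] | [x [i1 i2 /andP[hx1 hx2]]]].
  move: c12 (covers_lt c12) nut.
  case: (common _ i1 i2) => ->; case: (common _ i3 i4) => ->; rewrite ?ltxx //.
    by move=> ->.
  by move=> _ /lt_geF; rewrite ut.
case: (common _ i1 i2) => ex; rewrite ex in hx1 hx2.
  by have := lt_trans uh1 hx1; rewrite ltxx.
by have := le_lt_trans hx2 h2t; rewrite ltxx.
Qed.

(* A chain leaving a to the right of the edge a -> t, whose only element
   below t is a, cannot pass to the left of t at the height of t: it would
   have to cross the edge a -> t. *)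
Lemma branch_not_left a t y sE :
  covers a t -> covers a y ->
  det2 (vsub (pos t) (pos a)) (vsub (pos y) (pos a)) < 0 ->
  path covers y sE -> height t <= height (last y sE) ->
  (forall x, x \in a :: y :: sE -> x <= t -> x = a) ->
  ~ xchain a (y :: sE) (height t) < (pos t).1.
Proof.
move=> hat hay hdet pE htop only_a hleft.
have pt : path covers a [:: t] by rewrite /= hat.
have pE' : path covers a (y :: sE) by rewrite /= hay.
have [h1 [/andP[ah1 h1t] f1]] := first_edge_left [::] sE hat hay hdet (covers_h hat).
have xt : xchain a [:: t] (height t) = (pos t).1 by rewrite /= lexx xs_right ?covers_h.
apply: (@meet_only_at a [:: t] a (y :: sE) a h1 (height t) _ (ltW ah1)).
  move=> x xt' /only_a; apply.
  by move: xt'; rewrite !inE => /orP[] /eqP ->; rewrite ?lexx ?(ltW (covers_lt hat)).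
apply: chains_cross => //; try exact: ltW.
rewrite xt; exact: ltW.
Qed.

(* A chain from a starting to the left of a chain R ending at t, whose only
   element below t is a, cannot pass to the right of t at the height of t: it
   would have to cross R. *)
Lemma branch_not_right u r1 sR a t y sE :
  path covers u (r1 :: sR) -> last r1 sR = t -> covers a y -> path covers y sE ->
  height u <= height a -> height a <= height t -> height t <= height (last y sE) ->
  xchain a (y :: sE) (height a) < xchain u (r1 :: sR) (height a) ->
  (forall x, x \in a :: y :: sE -> x <= t -> x = a) ->
  ~ (pos t).1 < xchain a (y :: sE) (height t).
Proof.
move=> pR lR hay pE ua at' htop f1 only_a hright.
have pE' : path covers a (y :: sE) by rewrite /= hay.
have tR : xchain u (r1 :: sR) (height t) = (pos t).1.
  have tR : t \in u :: r1 :: sR by rewrite -lR inE mem_last orbT.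
  exact: (xat_vertex (path_ylt pR) (map_f pos tR)).
apply: (@meet_only_at a (y :: sE) u (r1 :: sR) a (height a) (height t) _ (lexx _)).
  move=> x xE xR; apply: only_a xE _.
  by have := path_le_last pR xR; rewrite /= lR.
apply: chains_cross => //; first by rewrite /= lR.
by rewrite tR; exact: ltW.
Qed.

Lemma no_second_branch u l1 sL a t r1 sR y :
  path covers u (l1 :: sL) -> last l1 sL = a -> covers a t ->
  path covers u (r1 :: sR) -> last r1 sR = t ->
  det2 (vsub (pos l1) (pos u)) (vsub (pos r1) (pos u)) < 0 ->
  (forall x, x \in u :: l1 :: rcons sL t -> x \in u :: r1 :: sR -> x = u \/ x = t) ->
  covers a y -> y != t ->
  det2 (vsub (pos t) (pos a)) (vsub (pos y) (pos a)) < 0 -> False.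
Proof.
move=> pL la hat pR lR hdet common hay yt hdet'.
have pLt : path covers u (l1 :: rcons sL t).
  by rewrite -rcons_cons rcons_path pL /= la hat.
have ua : u < a by move/allP: (path_gt pL); apply; rewrite -la mem_last.
have nut : ~~ covers u t.
  by apply/negP => /covers_between /(_ ua); apply; exact: covers_lt.
have at' := covers_h hat.
have [sE [pE lE]] := covering_chain (lex1 y).
have htop : height t <= height (last y sE) by rewrite lE le_h ?lex1.
have only_a : forall x, x \in a :: y :: sE -> x <= t -> x = a.
  move=> x; rewrite inE => /orP[/eqP -> // | xE] xt; exfalso.
  have yt' : y < t by rewrite lt_neqAle yt (le_trans (path_ge_head pE xE) xt).
  exact: covers_between hat (covers_lt hay) yt'.
have pE' : path covers a (y :: sE) by rewrite /= hay.
have tE : xchain a (y :: sE) (height t) != (pos t).1.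
  apply: chain_avoids_vertex => //; try exact: ltW.
  by apply/negP => /only_a /(_ (lexx t)) eta; rewrite eta ltxx in at'.
have start : xchain a (y :: sE) (height a) < xchain u (r1 :: sR) (height a).
  have aL : a \in u :: l1 :: rcons sL t.
    by rewrite in_cons -rcons_cons mem_rcons in_cons -la mem_last !orbT.
  rewrite (xat_head (path_ylt pE')) -(xat_vertex (path_ylt pLt) (map_f pos aL)).
  exact: chain_stays_left pLt (last_rcons _ _ _) pR lR hdet common nut _ (lt_h ua) at'.
move: tE; case: ltgtP => // [hleft | hright] _.
  exact: branch_not_left hat hay hdet' pE htop only_a hleft.
exact: branch_not_right pR lR hay pE (ltW (lt_h ua)) (ltW at') htop start only_a hright.
Qed.
End PlanarDiagram.

Section LeftBoundary.
Context {R : realFieldType} {disp : Order.disp_t} {L : finTBLatticeType disp}.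
Variable pos : L -> R * R.
Hypothesis Hpl : planar_diagram pos.
Local Open Scope order_scope.
Implicit Types (a t u x y z : L).

Definition leftmost_step x y : bool := covers x y &&
  [forall w, (covers x w && (w != y)) ==>
     (det2 (vsub (pos y) (pos x)) (vsub (pos w) (pos x)) < 0)%R].

Lemma leftmost_stepP x y : covers x y ->
  (forall w, covers x w -> w <> y ->
     (det2 (vsub (pos y) (pos x)) (vsub (pos w) (pos x)) < 0)%R) ->
  leftmost_step x y.
Proof.
move=> xy hl; rewrite /leftmost_step xy; apply/forallP => w.
by apply/implyP => /andP[xw /eqP wy]; apply: hl.
Qed.

Lemma left_boundary_path a : left_boundary pos a ->
  exists s, path leftmost_step \bot s /\ last \bot s = a.
Proof.
elim=> [|x y _ [s [ps ls]] xy hl]; first by exists [::].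
exists (rcons s y); rewrite rcons_path ps ls last_rcons.
by split => //; apply: leftmost_stepP.
Qed.

(* The left boundary up to a, cut at its last element u
   below z, and a chain from u through z to t bound a region which a second
   upper edge a -> y to the right of a -> t would have to leave by crossing
   one of them. *)
Lemma leftmost_cover_unique a t z y : left_boundary pos a -> leftmost_step a t ->
  covers z t -> z != a -> covers a y -> y = t.
Proof.
move=> lba /andP[hat /forallP hleft] zt za ay; apply/eqP/negPn/negP => yt.
have [s [ps ls]] := left_boundary_path lba.
have step_le : forall x x', leftmost_step x x' -> x <= x'.
  by move=> ? ? /andP[/covers_lt /ltW].
have [u [[|l1 sL] [uz pL lL /allP above]]] := split_last_below step_le ps (le0x z).
  have az : a < z by rewrite lt_neqAle eq_sym za -ls -lL.
  exact: covers_between hat az (covers_lt zt).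
rewrite ls /= in lL.
have pLc : path covers u (l1 :: sL) by apply: sub_path pL => ? ? /andP[].
have [r1 [sR [pR lR memR]]] := chain_through uz zt.
have ua : u < a by move/allP: (path_gt pLc); apply; rewrite -lL mem_last.
have l1z : ~~ (l1 <= z) by apply: above; rewrite mem_head.
have common : forall x, x \in u :: l1 :: rcons sL t -> x \in u :: r1 :: sR ->
    x = u \/ x = t.
  move=> x; rewrite in_cons -rcons_cons mem_rcons in_cons.
  case/or3P=> [/eqP -> | /eqP -> | xL]; [by left | by right | ].
  by case/memR => [-> | xz]; [right | move: (above x xL); rewrite xz].
have hdet : (det2 (vsub (pos l1) (pos u)) (vsub (pos r1) (pos u)) < 0)%R.
  move: pL => /andP[/andP[_ /forallP leftmost] _].
  apply: (implyP (leftmost r1)); rewrite (andP pR).1 /=.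
  apply/eqP => r1l1; rewrite r1l1 in memR.
  have [l1t | l1z'] : l1 = t \/ l1 <= z by apply: memR; rewrite !inE eqxx orbT.
    2: by rewrite l1z' in l1z.
  have l1L : l1 \in u :: l1 :: sL by rewrite !inE eqxx orbT.
  have := path_le_last pLc l1L; rewrite /= lL l1t.
  by rewrite (lt_geF (covers_lt hat)).
apply: (no_second_branch Hpl pLc lL hat pR lR hdet common ay yt).
by apply: (implyP (hleft y)); rewrite ay yt.
Qed.
End LeftBoundary.

(* Going up the left boundary, an element y with a
   second lower cover z besides its predecessor a would make a doubly
   irreducible (a has one lower cover by induction, one upper cover by
   leftmost_cover_unique), contradicting the minimality of c since a < y <= c. *)
Theorem lemma2p3 (R : realFieldType) (disp : Order.disp_t)
    (L : finTBLatticeType disp) (pos : L -> R * R) :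
  (4 <= #|L|)%N ->
  upper_semimodular (L := L) -> slim (L := L) ->
  planar_diagram pos ->
  forall c : L,
    left_boundary pos c -> doubly_irreducible c ->
    (forall c' : L, left_boundary pos c' -> doubly_irreducible c' -> (c <= c')%O) ->
  forall x : L, left_boundary pos x -> (x <= c)%O ->
    (#|lower_covers x| <= 1)%N.
Proof.
move=> _ _ _ Hpl c _ _ c_min x lbx; elim: lbx => [|a y lba IH ay hleft] yc.
  rewrite (_ : lower_covers _ = set0) ?cards0 //; apply/setP => w.
  by rewrite !inE; apply/negP => /covers_lt; rewrite ltx0.
have ac : (a <= c)%O := le_trans (ltW (covers_lt ay)) yc.
rewrite leqNgt; apply/negP => /card_gt1P [z1 [z2 [z1y z2y z12]]].
have [z zy za] : exists2 z, z \in lower_covers y & z != a.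
  by case: (eqVneq z1 a) => [e1 | ]; [exists z2; rewrite // -e1 eq_sym | exists z1].
have a_up : (#|upper_covers a| <= 1)%N.
  rewrite -(cards1 y); apply/subset_leq_card/subsetP => w; rewrite !inE => aw.
  rewrite inE in zy.
  by rewrite (leftmost_cover_unique Hpl lba (leftmost_stepP ay hleft) zy za aw).
have ca := c_min a lba (introT andP (conj (IH ac) a_up)).
by move: (le_lt_trans ca (covers_lt ay)) => /lt_geF; rewrite yc.
Qed.
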